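(* Let $n$ be a positive integer. The Logarithmic Least Squares Method is the unique weighting method $f: \mathcal{A}^{n \times n} \to \mathcal{R}^n$ satisfying correctness and invariance to $\alpha$-transformation on a triad. That is, a weighting method $f$ satisfies both properties if and only if, for every $\mathbf{A} \in \mathcal{A}^{n\times n}$ and every $i$, \[ f_i(\mathbf{A}) = \frac{\prod_{j=1}^n a_{i,j}^{1/n}}{\sum_{k=1}^n \prod_{j=1}^n a_{k,j}^{1/n}}. \]
   Context: A pairwise comparison matrix of size $n$ is a matrix $\mathbf{A} = [a_{i,j}]$ with all entries positive and $a_{j,i} = 1/a_{i,j}$ for all $1 \le i,j \le n$; $\mathcal{A}^{n\times n}$ denotes the set of these. $\mathbf{A}$ is consistent if $a_{i,k} = a_{i,j}a_{j,k}$ for all $i,j,k$. A weight vector is $\mathbf{w} \in \mathbb{R}^n$ with all entries positive and $\sum_i w_i = 1$; $\mathcal{R}^n$ denotes the set of weight vectors. A weighting method is any function $f: \mathcal{A}^{n\times n} \to \mathcal{R}^n$. The Logarithmic Least Squares Method (LLSM) assigns to $\mathbf{A}$ the minimizer over $\mathbf{w} \in \mathcal{R}^n$ of $\sum_{i=1}^n\sum_{j=1}^n [\log a_{i,j} - \log(w_i/w_j)]^2$, which equals the normalized row geometric mean vector $w_i = \prod_j a_{i,j}^{1/n} / \sum_k \prod_j a_{k,j}^{1/n}$. Correctness: $f$ is correct if for every consistent $\mathbf{A}\in\mathcal{A}^{n\times n}$, $f_i(\mathbf{A})/f_j(\mathbf{A}) = a_{i,j}$ for all $i,j$. An $\alpha$-transformation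 on the triad $(i,j,k)$ (three distinct indices), with $\alpha>0$, maps $\mathbf{A}$ to the pairwise comparison matrix $\hat{\mathbf{A}}$ with $\hat a_{i,j} = \alpha a_{i,j}$, $\hat a_{j,i} = a_{j,i}/\alpha$, $\hat a_{j,k} = \alpha a_{j,k}$, $\hat a_{k,j} = a_{k,j}/\alpha$, $\hat a_{k,i} = \alpha a_{k,i}$, $\hat a_{i,k} = a_{i,k}/\alpha$, and all other entries unchanged. Invariance to $\alpha$-transformation on a triad: $f(\mathbf{A}) = f(\hat{\mathbf{A}})$ whenever $\hat{\mathbf{A}}$ is obtained from $\mathbf{A}$ by an $\alpha$-transformation on a triad. *)

From HB Require Import structures.
From mathcomp Require Import all_boot all_order all_algebra.
From mathcomp Require Import reals exp.
Set Implicit Arguments. Unset Strict Implicit. Unset Printing Implicit Defensive.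
Import Order.TTheory GRing.Theory Num.Theory.
Local Open Scope ring_scope.

Section Defs.
Variable R : realType.

Definition is_pcm n (A : 'M[R]_n) : Prop :=
  forall i j : 'I_n, 0 < A i j /\ A j i = (A i j)^-1.

Definition is_consistent n (A : 'M[R]_n) : Prop :=
  forall i j k : 'I_n, A i k = A i j * A j k.

Definition is_weight_vector n (w : 'I_n -> R) : Prop :=
  (forall i, 0 < w i) /\ \sum_(i < n) w i = 1.

(* a weighting method A^{nxn} -> R^n, represented as a function on all
   matrices whose values on pairwise comparison matrices are weight vectors *)
Definition is_weighting_method n (f : 'M[R]_n -> 'I_n -> R) : Prop :=
  forall A, is_pcm A -> is_weight_vector (f A).

Definition row_geomean n (A : 'M[R]_n) (i : 'I_n) : R :=
  \prod_(j < n) (A i j) `^ (n%:R^-1).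

Definition llsm n (A : 'M[R]_n) (i : 'I_n) : R :=
  row_geomean A i / \sum_(k < n) row_geomean A k.

Definition correct n (f : 'M[R]_n -> 'I_n -> R) : Prop :=
  forall A, is_pcm A -> is_consistent A ->
    forall i j, f A i / f A j = A i j.

Definition alpha_transform n (A : 'M[R]_n) (i j k : 'I_n) (alpha : R)
  : 'M[R]_n :=
  \matrix_(p, q)
    if (p == i) && (q == j) then alpha * A i j
    else if (p == j) && (q == i) then A j i / alpha
    else if (p == j) && (q == k) then alpha * A j k
    else if (p == k) && (q == j) then A k j / alpha
    else if (p == k) && (q == i) then alpha * A k i
    else if (p == i) && (q == k) then A i k / alpha
    else A p q.

Definition triad_invariant n (f : 'M[R]_n -> 'I_n -> R) : Prop :=
  forall A, is_pcm A -> forall (i j k : 'I_n) (alpha : R),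
    i != j -> j != k -> i != k -> 0 < alpha ->
    f A = f (alpha_transform A i j k alpha).

End Defs.

From HB Require Import structures.
From mathcomp Require Import all_boot all_order all_algebra.
From mathcomp Require Import reals exp.
From mathcomp Require sequences.
From mathcomp Require Import ring lra.
From mathcomp Require boolp.
Import Order.TTheory GRing.Theory Num.Theory.
Local Open Scope ring_scope.
Local Notation expR := sequences.expR.
Set Implicit Arguments.
Unset Strict Implicit.

(* Let l_p(A) = \sum_q ln a_pq be the log row sums.  An alpha-transformation
   on a triad multiplies one entry of each of its three rows by alpha and
   divides another by alpha, so it preserves l; as the LLSM weights are the
   normalised exp (l_p / n), LLSM is triad invariant, and it is correct since
   consistency gives l_p - l_q = n ln a_pq.  Conversely, fix a pivot index:
   transformations on the triads through the pivot set every entry off the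
   pivot row and column to any prescribed reciprocal values, and the preserved
   row sums then force the pivot column too.  So a triad-invariant method only
   sees l, and A may be replaced by the consistent matrix [g_p / g_q] with the
   same log row sums, g the row geometric means of A; correctness on that
   matrix leaves only the weights g / \sum g. *)

Section FiniteSums.
Variables (R : realType) (I : finType).

Lemma sumr_gt0 (F : I -> R) (i : I) : (forall k, 0 < F k) -> 0 < \sum_k F k.
Proof.
move=> F_gt0; rewrite (bigD1 i) //=.
by apply: ltr_wpDr (F_gt0 i); apply: sumr_ge0 => k _; exact: ltW.
Qed.

Lemma sum_skew_eq0 (x : I -> I -> R) : (forall p q, x q p = - x p q) ->
  \sum_p \sum_q x p q = 0.
Proof.
move=> x_skew; set S := (X in X = 0).
have S_opp : S = - S.
  rewrite {1}/S exchange_big /= -sumrN; apply: eq_bigr => p _.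
  by rewrite -sumrN; apply: eq_bigr => q _; exact: x_skew.
lra.
Qed.

Lemma sum_ln_mul_div (u v : I -> R) (x y : I) (a : R) :
  x != y -> (forall q, 0 < v q) -> 0 < a ->
  u x = a * v x -> u y = v y / a -> (forall q, q != x -> q != y -> u q = v q) ->
  \sum_q ln (u q) = \sum_q ln (v q).
Proof.
move=> xy v_gt0 a_gt0 ux uy u_v.
have split2 (w : I -> R) :
    \sum_q w q = w x + w y + \sum_(q | (q != x) && (q != y)) w q.
  rewrite (bigD1 x) //= (bigD1 y) 1?eq_sym //= addrA.
  by congr (_ + _); apply: eq_bigl => q; rewrite andbC.
rewrite split2 [RHS]split2 ux uy lnM ?ln_div ?posrE //.
rewrite (eq_bigr (fun q => ln (v q))) => [|q /andP [qx qy]]; last by rewrite u_v.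
by congr (_ + _); ring.
Qed.

End FiniteSums.

Lemma weight_vector_ratioE (R : realType) (n : nat) (w g : 'I_n -> R) :
  is_weight_vector w -> (forall k, 0 < g k) ->
  (forall p q, w p / w q = g p / g q) -> forall p, w p = g p / \sum_k g k.
Proof.
move=> [w_gt0 w_sum1] g_gt0 w_ratio p.
have w_prop k : w k = g k * (w p / g p).
  have := w_ratio k p; move/(congr1 ( *%R^~ (w p))).
  by rewrite divfK ?gt_eqF // => ->; field; rewrite gt_eqF.
move: w_sum1; under eq_bigr do rewrite w_prop; rewrite -mulr_suml => sum_g.
have sum_g_neq0 : \sum_k g k != 0 by apply/eqP => S0; move: sum_g; rewrite S0 mul0r; lra.
rewrite [LHS](w_prop p); congr (_ * _).
by apply: (mulfI sum_g_neq0); rewrite sum_g mulfV.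
Qed.

Section PairwiseComparison.
Variables (R : realType) (n : nat).
Implicit Types (A B : 'M[R]_n) (g : 'I_n -> R).

Lemma pcm_gt0 A p q : is_pcm A -> 0 < A p q.
Proof. by move=> A_pcm; have [] := A_pcm p q. Qed.

Lemma pcmV A p q : is_pcm A -> A q p = (A p q)^-1.
Proof. by move=> A_pcm; have [] := A_pcm p q. Qed.

Lemma pcm_diag A p : is_pcm A -> A p p = 1.
Proof.
move=> A_pcm; have App_gt0 := pcm_gt0 p p A_pcm.
have : A p p * A p p = 1 by rewrite {1}(pcmV p p A_pcm) mulVf ?gt_eqF.
by move/eqP; rewrite -expr2 sqrf_eq1 => /orP [/eqP //| /eqP App]; lra.
Qed.

Definition logrow A p : R := \sum_q ln (A p q).

Lemma sum_logrow_pcm A : is_pcm A -> \sum_p logrow A p = 0.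
Proof.
move=> A_pcm; apply: sum_skew_eq0 => p q.
by rewrite (pcmV p q A_pcm) lnV // posrE pcm_gt0.
Qed.

Lemma row_geomeanE A p : is_pcm A -> row_geomean A p = expR (logrow A p / n%:R).
Proof.
move=> A_pcm; rewrite /row_geomean /logrow mulr_suml expR_sum.
by apply: eq_bigr => q _; rewrite /powR gt_eqF ?pcm_gt0 // mulrC.
Qed.

Lemma row_geomean_gt0 A p : is_pcm A -> 0 < row_geomean A p.
Proof. by move=> A_pcm; rewrite row_geomeanE ?expR_gt0. Qed.

Lemma ln_row_geomean A p : is_pcm A -> ln (row_geomean A p) = logrow A p / n%:R.
Proof. by move=> A_pcm; rewrite row_geomeanE ?expRK. Qed.

Lemma eq_llsm_logrow A B : is_pcm A -> is_pcm B -> logrow A =1 logrow B ->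
  llsm A = llsm B.
Proof.
move=> A_pcm B_pcm AB; have gAB p : row_geomean A p = row_geomean B p.
  by rewrite !row_geomeanE ?AB.
by apply: boolp.funext => p; rewrite /llsm gAB; under eq_bigr do rewrite gAB.
Qed.

Definition ratio_mx g : 'M[R]_n := \matrix_(p, q) (g p / g q).

Lemma ratio_mx_pcm g : (forall k, 0 < g k) -> is_pcm (ratio_mx g).
Proof. by move=> g_gt0 p q; rewrite !mxE divr_gt0 ?invf_div. Qed.

Lemma ratio_mx_consistent g : (forall k, g k != 0) -> is_consistent (ratio_mx g).
Proof. by move=> g_neq0 p q r; rewrite !mxE mulrA divfK. Qed.

Lemma logrow_ratio_mx g p : (forall k, 0 < g k) ->
  logrow (ratio_mx g) p = ln (g p) * n%:R - \sum_q ln (g q).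
Proof.
move=> g_gt0; rewrite /logrow (eq_bigr (fun q => ln (g p) - ln (g q))).
  by rewrite sumrB sumr_const card_ord mulr_natr.
by move=> q _; rewrite mxE ln_div ?posrE.
Qed.

End PairwiseComparison.

Section AlphaTransform.
Variables (R : realType) (n : nat) (A : 'M[R]_n) (i j k : 'I_n) (a : R).
Hypotheses (A_pcm : is_pcm A) (ij : i != j) (jk : j != k) (ik : i != k) (a_gt0 : 0 < a).
Local Notation B := (alpha_transform A i j k a).

Ltac case_triad p :=
  have [->|?] := eqVneq p i; [|have [->|?] := eqVneq p j; [|have [->|?] := eqVneq p k]].

Ltac simpl_entry := rewrite ?mxE; repeat match goal with
  | H : is_true (?x != ?y) |- context[?x == ?y] => rewrite (negbTE H)
  | H : is_true (?x != ?y) |- context[?y == ?x] => rewrite [y == x]eq_sym (negbTE H)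
  end; rewrite ?eqxx /=.

Lemma alpha_transform_pcm : is_pcm B.
Proof.
move=> p q; have A_gt0 := pcm_gt0 _ _ A_pcm.
case_triad p; case_triad q; simpl_entry; try exact: A_pcm.
all: split; [rewrite ?mulr_gt0 ?divr_gt0 ?invr_gt0 // | rewrite [in LHS]pcmV //].
all: by rewrite ?invf_div ?invfM // mulrC.
Qed.

Lemma alpha_transform_jk : B j k = a * A j k.
Proof. by simpl_entry. Qed.

Lemma alpha_transform_off p q : p != i -> q != i ->
  ~~ ((p == j) && (q == k)) -> ~~ ((p == k) && (q == j)) -> B p q = A p q.
Proof.
move=> pi qi pq_jk pq_kj.
by rewrite mxE (negbTE pi) (negbTE qi) (negbTE pq_jk) (negbTE pq_kj) !andbF.
Qed.

Lemma logrow_alpha_transform p : logrow B p = logrow A p.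
Proof.
have A_gt0 := pcm_gt0 _ _ A_pcm; rewrite /logrow.
case_triad p; last by apply: eq_bigr => q _; simpl_entry.
- apply: (sum_ln_mul_div jk (A_gt0 i) a_gt0) => [||q ? ?]; by simpl_entry.
- have ki : k != i by rewrite eq_sym.
  apply: (sum_ln_mul_div ki (A_gt0 j) a_gt0) => [||q ? ?]; by simpl_entry.
- apply: (sum_ln_mul_div ij (A_gt0 k) a_gt0) => [||q ? ?]; by simpl_entry.
Qed.

End AlphaTransform.

Section CopyEntries.
Variables (R : realType) (n : nat) (i0 : 'I_n) (B : 'M[R]_n).
Hypothesis B_pcm : is_pcm B.
Implicit Types (A : 'M[R]_n) (x : 'I_n * 'I_n) (s : seq ('I_n * 'I_n)).

Definition off_pivot x := [&& x.1 != i0, x.2 != i0 & x.1 != x.2].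

Definition copy_entry A x :=
  alpha_transform A i0 x.1 x.2 (B x.1 x.2 / A x.1 x.2).

Definition copy_entries A s := foldl copy_entry A s.

Lemma copy_entry_triad A x : is_pcm A -> off_pivot x ->
  [/\ i0 != x.1, x.1 != x.2, i0 != x.2 & 0 < B x.1 x.2 / A x.1 x.2].
Proof.
move=> A_pcm /and3P [x1 x2 x12].
by rewrite ![i0 == _]eq_sym x1 x2 x12 divr_gt0 ?pcm_gt0.
Qed.

Lemma copy_entry_pcm A x : is_pcm A -> off_pivot x -> is_pcm (copy_entry A x).
Proof.
by move=> A_pcm /(copy_entry_triad A_pcm) [*]; apply: alpha_transform_pcm.
Qed.

Lemma logrow_copy_entry A x : is_pcm A -> off_pivot x ->
  logrow (copy_entry A x) =1 logrow A.
Proof.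
by move=> A_pcm /(copy_entry_triad A_pcm) [*]; apply: logrow_alpha_transform.
Qed.

Lemma copy_entry_at A x : is_pcm A -> off_pivot x -> copy_entry A x x.1 x.2 = B x.1 x.2.
Proof.
move=> A_pcm x_off; have [*] := copy_entry_triad A_pcm x_off.
by rewrite /copy_entry alpha_transform_jk // divfK // gt_eqF ?pcm_gt0.
Qed.

Lemma copy_entryE A x p q : is_pcm A -> off_pivot x -> p != i0 -> q != i0 ->
  copy_entry A x p q = if (x == (p, q)) || (x == (q, p)) then B p q else A p q.
Proof.
move=> A_pcm x_off p0 q0; have [x_pq|x_pq] := eqVneq x (p, q).
  by rewrite x_pq in x_off *; exact: copy_entry_at.
have [x_qp|x_qp] := eqVneq x (q, p).
  rewrite x_qp in x_off *.
  by rewrite (pcmV _ _ (copy_entry_pcm A_pcm x_off)) (copy_entry_at A_pcm x_off) -pcmV.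
rewrite /copy_entry alpha_transform_off //.
  by apply: contra x_pq => /andP [/eqP -> /eqP ->]; rewrite -surjective_pairing.
by apply: contra x_qp => /andP [/eqP -> /eqP ->]; rewrite -surjective_pairing.
Qed.

Lemma copy_entries_pcm A s : is_pcm A -> all off_pivot s -> is_pcm (copy_entries A s).
Proof.
elim: s A => [//|x s IH] A A_pcm /andP [x_off s_off].
exact/IH/s_off/copy_entry_pcm.
Qed.

Lemma logrow_copy_entries A s : is_pcm A -> all off_pivot s ->
  logrow (copy_entries A s) =1 logrow A.
Proof.
elim: s A => [//|x s IH] A A_pcm /andP [x_off s_off] p /=.
by rewrite IH ?logrow_copy_entry //; exact: copy_entry_pcm.
Qed.

Lemma copy_entriesE A s p q : is_pcm A -> all off_pivot s -> p != i0 -> q != i0 ->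
  copy_entries A s p q = if ((p, q) \in s) || ((q, p) \in s) then B p q else A p q.
Proof.
move=> + + p0 q0; elim: s A => [//|x s IH] A A_pcm /andP [x_off s_off] /=.
rewrite IH ?copy_entryE ?in_cons ?[_ == x]eq_sym //; last exact: copy_entry_pcm.
by case: ((p, q) \in s); case: ((q, p) \in s); rewrite ?orbT ?orbF.
Qed.

Lemma triad_invariant_copy_entries (f : 'M[R]_n -> 'I_n -> R) A s :
  triad_invariant f -> is_pcm A -> all off_pivot s -> f (copy_entries A s) = f A.
Proof.
move=> f_inv; elim: s A => [//|x s IH] A A_pcm /andP [x_off s_off] /=.
rewrite IH //; last exact: copy_entry_pcm.
by have [*] := copy_entry_triad A_pcm x_off; apply/esym/f_inv.
Qed.

End CopyEntries.

Lemma eq_pcm_off_pivot (R : realType) (n : nat) (i0 : 'I_n) (A B : 'M[R]_n) :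
  is_pcm A -> is_pcm B -> logrow A =1 logrow B ->
  (forall p q, p != i0 -> q != i0 -> A p q = B p q) -> A = B.
Proof.
move=> A_pcm B_pcm AB_row AB_off.
have AB_col p : p != i0 -> A p i0 = B p i0.
  move=> p0; apply: ln_inj; rewrite ?posrE ?pcm_gt0 //.
  have := AB_row p; rewrite /logrow (bigD1 i0) //= [in RHS](bigD1 i0) //=.
  by rewrite (eq_bigr (fun q => ln (B p q))) => [/addIr //|q q0]; rewrite AB_off.
apply/matrixP => p q.
have [-> | p0] := eqVneq p i0; have [-> | q0] := eqVneq q i0.
- by rewrite !pcm_diag.
- by rewrite pcmV // [RHS]pcmV // AB_col.
- exact: AB_col.
- exact: AB_off.
Qed.

Lemma triad_invariant_logrow (R : realType) (n : nat) (f : 'M[R]_n -> 'I_n -> R)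
    (A B : 'M[R]_n) :
  triad_invariant f -> is_pcm A -> is_pcm B -> logrow A =1 logrow B -> f A = f B.
Proof.
move=> f_inv A_pcm B_pcm AB_row.
have [i0 _ | no_index] := pickP (@predT 'I_n); last first.
  by congr f; apply/matrixP => p; have := no_index p.
pose s := [seq x <- enum {: 'I_n * 'I_n} | off_pivot i0 x].
have s_off : all (off_pivot i0) s := filter_all _ _.
rewrite -(triad_invariant_copy_entries B_pcm f_inv A_pcm s_off); congr f.
apply: (eq_pcm_off_pivot (i0 := i0)) => //.
- exact: copy_entries_pcm.
- by move=> p; rewrite logrow_copy_entries.
move=> p q p0 q0; rewrite copy_entriesE //.
have [<- | pq] := eqVneq p q; first by case: ifP; rewrite !pcm_diag.
by rewrite mem_filter /off_pivot p0 q0 pq mem_enum.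
Qed.

Section LLSM.
Variables (R : realType) (n : nat).
Hypothesis n_gt0 : (0 < n)%N.

Lemma row_geomean_ratio (A : 'M[R]_n) p q : is_pcm A -> is_consistent A ->
  row_geomean A p / row_geomean A q = A p q.
Proof.
move=> A_pcm A_cons; have g_gt0 k := row_geomean_gt0 k A_pcm.
apply: ln_inj; rewrite ?posrE ?divr_gt0 ?pcm_gt0 //.
rewrite ln_div ?posrE // !ln_row_geomean // -mulrBl.
have -> : logrow A p - logrow A q = ln (A p q) * n%:R.
  rewrite /logrow mulr_natr -sumrB -[n in _ *+ n]card_ord -sumr_const; apply: eq_bigr => r _.
  by rewrite (A_cons p q r) lnM ?posrE ?pcm_gt0 // addrK.
by rewrite mulfK // pnatr_eq0 -lt0n.
Qed.

Lemma llsm_correct : correct (@llsm R n).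
Proof.
move=> A A_pcm A_cons p q; have g_gt0 k := row_geomean_gt0 k A_pcm.
have S_gt0 : 0 < \sum_k row_geomean A k := sumr_gt0 p g_gt0.
rewrite /llsm -row_geomean_ratio //; field.
by rewrite !gt_eqF.
Qed.

Lemma llsm_triad_invariant : triad_invariant (@llsm R n).
Proof.
move=> A A_pcm i j k a ij jk ik a_gt0.
apply: eq_llsm_logrow => //; first exact: alpha_transform_pcm.
by move=> p; rewrite logrow_alpha_transform.
Qed.

Lemma correct_triad_invariant_llsm (f : 'M[R]_n -> 'I_n -> R) :
  is_weighting_method f -> correct f -> triad_invariant f ->
  forall A, is_pcm A -> f A =1 llsm A.
Proof.
move=> f_weight f_correct f_inv A A_pcm.
pose g := row_geomean A; have g_gt0 k : 0 < g k := row_geomean_gt0 k A_pcm.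
pose C := ratio_mx g; have C_pcm : is_pcm C := ratio_mx_pcm g_gt0.
have C_logrow : logrow A =1 logrow C.
  move=> p; rewrite logrow_ratio_mx // /g ln_row_geomean //.
  under eq_bigr do rewrite ln_row_geomean //.
  by rewrite -mulr_suml sum_logrow_pcm // mul0r subr0 divfK // pnatr_eq0 -lt0n.
rewrite (triad_invariant_logrow f_inv A_pcm C_pcm C_logrow).
apply: (weight_vector_ratioE (f_weight C C_pcm) g_gt0) => p q.
rewrite f_correct ?mxE //.
by apply: ratio_mx_consistent => k; rewrite gt_eqF.
Qed.

End LLSM.

Theorem theorem4p1 (R : realType) (n : nat) (hn : (0 < n)%N)
  (f : 'M[R]_n -> 'I_n -> R) (hf : is_weighting_method f) :
  (correct f /\ triad_invariant f) <->
  (forall A : 'M[R]_n, is_pcm A -> forall i : 'I_n, f A i = llsm A i).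
Proof.
split=> [[f_correct f_inv] | f_llsm]; first exact: correct_triad_invariant_llsm.
have f_eq A : is_pcm A -> f A = llsm A.
  by move=> A_pcm; apply: boolp.funext; exact: f_llsm.
split=> [A A_pcm A_cons | A A_pcm i j k a ij jk ik a_gt0].
  by rewrite f_eq //; exact: llsm_correct.
rewrite !f_eq //; last exact: alpha_transform_pcm.
exact: llsm_triad_invariant.
Qed.
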